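(* Let $N$ be large enough that $g(N)<N$, $(N-1)\sqrt{\frac{\ln N}{N}}\ge\frac{8h}{\sqrt5}$, and $\left(N-\frac32\right)\ln\left(1+\sqrt{\frac{5\ln N}{N}}\right)\ge8h$. Then in any round $r$, with probability at least $1-\frac{6M+3}{N^{10}}$, $$\xi_0\ge1-\sqrt{\frac{5\ln N}{N}}\qquad\text{and}\qquad\xi_1\le1+\sqrt{\frac{5\ln N}{N}},$$ where $\xi_0=\left(1-\frac{2}{N^2+1}\right)^{V^r_i}\left(1-\frac{2}{N^3-N^2+1}\right)^{V^r-V^r_i}$ and $\xi_1=\left(1+\frac{2}{N^2-1}\right)^{V^r_i}\left(1+\frac{2}{N^3-N^2-1}\right)^{V^r-V^r_i}$.
   Context: Setting. $\mathcal G=(\mathcal N,\mathcal E)$ is a connected, non-bipartite undirected graph on agents $\mathcal N=\{1,\dots,N\}$; $\mathcal N_i$ is the neighbor set of $i$, $N_i=|\mathcal N_i|$. There are $M$ options; quality signals $\Phi_j^r\in\{0,1\}$ are i.i.d. Bernoulli$(\eta_j)$ over rounds. $X^r_{i,j}\in\{0,1\}$ indicates agent $i$ adopts option $j$ in round $r$ ($\sum_jX^r_{i,j}\le1$). The function $g:\mathbb N^+\to\mathbb R$ satisfies: for every $\ell>0$, $g(N)>\ell\ln N$ and $g(N)<\ell N$ for all sufficiently large $N$. Parameters: $\varepsilon>0$, $\mu\in(0,1)$, $\beta\in(1/2,1)$, $\sigma\ge11$, $h=16\sigma/(1-\beta)$. Metropolis–Hastings random walk: from $i$ move to $i'\in\mathcal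 N_i$ with probability $\min\{1/N_i,1/N_{i'}\}$, else stay; walk length $L=O(\log N)$ chosen so that the endpoint is at each agent with probability in $[\frac1N-\frac1{N^3},\frac1N+\frac1{N^3}]$. Round $r$: (1) an agent that adopted an option in round $r-1$ perturbs each coordinate of its adoption vector independently (keep with probability $\frac{e^{\varepsilon/2}}{e^{\varepsilon/2}+1}$, flip otherwise); (2) each such agent launches $hg(N)$ independent random-walk tokens of length $L$ carrying its perturbed vector (forwarded via per-agent FIFO queues, up to $hg(N)$ tokens per agent per slot); a token is sampled by the agent where it ends; $V^r$ is the total number of tokens and $V^r_i$ the number sampled by $i$; (3) with $\Lambda^r_{i,j}$ the fraction of $i$'s sampled vectors with $j$-th coordinate $1$, $\widetilde Q^r_{i,j}=\max\{\frac{e^{\varepsilon/2}+1}{e^{\varepsilon/2}-1}\Lambda^r_{i,j}-\frac1{e^{\varepsilon/2}-1},0\}$, $\widehat Q^r_{i,j}=\widetilde Q^r_{i,j}/\sum_{j'}\widetilde Q^r_{i,j'}$, and $i$ selects option $j$ with probability $(1-\mu)\widehat Q^r_{i,j}+\mu/M$; (4) having selected $j^*$, $i$ adopts it with probability $\beta$ if $\Phi^r_{j^*}=1$, $1-\beta$ if $\Phi^r_{j^*}=0$, else adopts nothing. *)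

From HB Require Import structures.
From mathcomp Require Import all_boot all_order all_algebra.
From mathcomp Require Import reals exp.
Set Implicit Arguments. Unset Strict Implicit. Unset Printing Implicit Defensive.
Import Order.TTheory GRing.Theory Num.Theory.
Local Open Scope ring_scope.

Definition undirected_simple (N : nat) (adj : rel 'I_N) : Prop :=
  (forall a b, adj a b = adj b a) /\ (forall a, ~~ adj a a).

Definition graph_connected (N : nat) (adj : rel 'I_N) : Prop :=
  forall a b, connect adj a b.

Definition non_bipartite (N : nat) (adj : rel 'I_N) : Prop :=
  ~ (exists col : 'I_N -> bool, forall a b, adj a b -> col a != col b).

Definition ndeg (N : nat) (adj : rel 'I_N) (a : 'I_N) : nat :=
  #|[set b | adj a b]|.

Definition mh (R : realType) (N : nat) (adj : rel 'I_N) (a b : 'I_N) : R :=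
  if adj a b then Num.min (ndeg adj a)%:R^-1 (ndeg adj b)%:R^-1
  else if a == b then
    1 - \sum_(c | adj a c) Num.min (ndeg adj a)%:R^-1 (ndeg adj c)%:R^-1
  else 0.

Fixpoint walkprob (R : realType) (N : nat) (adj : rel 'I_N) (L : nat)
  (a b : 'I_N) : R :=
  match L with
  | 0 => (a == b)%:R
  | L'.+1 => \sum_(c : 'I_N) @walkprob R N adj L' a c * @mh R N adj c b
  end.

(* Tokens of a round: agent s in the adopter set S launches T tokens,
   token (s, t) for t < T. *)
Definition token (N T : nat) (S : {set 'I_N}) : finType :=
  {k : 'I_N * 'I_T | k.1 \in S}.

(* An outcome assigns to every token the agent where its walk ends. *)
Definition outcome (N T : nat) (S : {set 'I_N}) : finType :=
  {ffun token T S -> 'I_N}.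

(* probability of an outcome: the walks are independent *)
Definition outcome_prob (R : realType) (N : nat) (adj : rel 'I_N) (L T : nat)
  (S : {set 'I_N}) (w : outcome T S) : R :=
  \prod_(k : token T S) @walkprob R N adj L (val k).1 (w k).

Definition Prob (R : realType) (N : nat) (adj : rel 'I_N) (L T : nat)
  (S : {set 'I_N}) (E : pred (outcome T S)) : R :=
  \sum_(w : outcome T S | E w) @outcome_prob R N adj L T S w.

(* V^r = total number of tokens, V^r_i = number sampled by i *)
Definition Vtot (N T : nat) (S : {set 'I_N}) : nat := #|token T S|.
Definition Vsampled (N T : nat) (S : {set 'I_N}) (i : 'I_N) (w : outcome T S)
  : nat := #|[set k | w k == i]|.

Definition xi0 (R : realType) (N : nat) (V Vi : nat) : R :=
  (1 - 2 / (N%:R ^+ 2 + 1)) ^+ Vi * (1 - 2 / (N%:R ^+ 3 - N%:R ^+ 2 + 1)) ^+ (V - Vi).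
Definition xi1 (R : realType) (N : nat) (V Vi : nat) : R :=
  (1 + 2 / (N%:R ^+ 2 - 1)) ^+ Vi * (1 + 2 / (N%:R ^+ 3 - N%:R ^+ 2 - 1)) ^+ (V - Vi).

(* Since V^r <= N T <= h N^2, the two bounds follow deterministically from
   V^r_i < 5hN/2: Bernoulli's inequality gives xi_0 >= 1 - 7h/(N-1) and
   1 + x <= e^x gives xi_1 <= exp (7h/(N-3/2)), which the two size conditions
   on N turn into 1 -/+ sqrt (5 ln N / N).  V^r_i is a sum of independent
   indicators, one per token, each of mean at most 1/N + 1/N^3; the Chernoff
   bound with parameter 1/2 (using e^(1/2) <= 2) gives
   P(V^r_i >= 5hN/2) <= exp (1.1 hN - 5hN/4) <= e^(-10N) <= N^(-10). *)

From HB Require Import structures.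
From mathcomp Require Import all_boot all_order all_algebra.
From mathcomp Require Import reals exp.
From mathcomp Require Import sequences lra.
Import Order.TTheory GRing.Theory Num.Theory.
Local Open Scope ring_scope.

Lemma bernoulli_ineq {R : realFieldType} (x : R) (k : nat) :
  -1 <= x -> 1 + k%:R * x <= (1 + x) ^+ k.
Proof.
move=> x_ge; elim: k => [|k IHk]; first by rewrite mul0r addr0 expr0.
have x1_ge0 : 0 <= 1 + x by lra.
have kx2_ge0 : 0 <= k%:R * x * x by rewrite -mulrA mulr_ge0 // -expr2 sqr_ge0.
rewrite exprS -natr1; apply: le_trans (ler_wpM2l x1_ge0 IHk); nra.
Qed.

Lemma mulr_ge1B {R : realDomainType} (x y u v : R) :
  x <= 1 -> y <= 1 -> 1 - u <= x -> 1 - v <= y -> 1 - (u + v) <= x * y.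
Proof. nra. Qed.

Lemma expr1B_ge {R : realFieldType} {a : R} (k : nat) :
  0 <= a <= 1 -> [/\ 1 - k%:R * a <= (1 - a) ^+ k & (1 - a) ^+ k <= 1].
Proof.
move=> /andP[a_ge0 a_le1]; split.
  by rewrite -mulrN; apply: bernoulli_ineq; lra.
by rewrite exprn_ile1 // ?subr_ge0 ?gerBl.
Qed.

Lemma expr1D_le_expR {R : realType} (a : R) (k : nat) :
  0 <= a -> (1 + a) ^+ k <= expR (k%:R * a).
Proof.
move=> a_ge0; rewrite expRM_natl lerXn2r ?nnegrE ?expR_ge0 ?expR_ge1Dx //; lra.
Qed.

Lemma expR_half_le2 {R : realType} : expR (2^-1 : R) <= 2.
Proof.
have := expR_ge1Dx (- 2^-1 : R); have := expRxMexpNx_1 (2^-1 : R).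
have := expR_gt0 (2^-1 : R); nra.
Qed.

Lemma expRN_natmul_le_invXn {R : realType} (x : R) (k : nat) :
  0 < x -> expR (- (k%:R * x)) <= (x ^+ k)^-1.
Proof.
move=> x_gt0; rewrite expRN expRM_natl lef_pV2 ?posrE ?exprn_gt0 ?expR_gt0 //.
rewrite lerXn2r ?nnegrE ?expR_ge0 ?(ltW x_gt0) //.
by apply: le_trans (expR_ge1Dx _); lra.
Qed.

Lemma markov_expR {R : realType} {I : finType} (P X : I -> R) (a : R) :
  (forall w, 0 <= P w) -> \sum_(w | a <= X w) P w <= expR (- a) * \sum_w P w * expR (X w).
Proof.
move=> P_ge0; rewrite mulr_sumr [leRHS](bigID (fun w => a <= X w)) /=.
apply: le_trans (_ : \sum_(w | a <= X w) expR (- a) * (P w * expR (X w)) <= _).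
  apply: ler_sum => w a_le; rewrite mulrCA -expRD -[leLHS]mulr1 ler_wpM2l //.
  by apply: le_trans (expR_ge1Dx _); lra.
by rewrite lerDl; apply: sumr_ge0 => w _; rewrite !mulr_ge0 ?expR_ge0.
Qed.

Lemma mgf_indicator_le {R : realType} {I : finType} (p : I -> R) (i : I) :
  (forall b, 0 <= p b) -> \sum_b p b = 1 ->
  \sum_b p b * expR (2^-1 * (b == i)%:R) <= expR (p i).
Proof.
move=> p_ge0 p_sum1.
apply: le_trans (_ : \sum_b p b * (1 + (b == i)%:R) <= _).
  apply: ler_sum => b _; apply: ler_wpM2l => //.
  by case: (b == i); rewrite ?mulr0 ?expR0 ?addr0 // mulr1 expR_half_le2.
under eq_bigr do rewrite mulrDr mulr1.
rewrite big_split /= p_sum1 (bigD1 i) //= eqxx mulr1 big1 ?addr0 ?expR_ge1Dx //.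
by move=> b /negbTE ->; rewrite mulr0.
Qed.

Lemma sqrt5_ln_div_bounds {R : realType} {n c : R} :
  1 <= n -> 0 < c -> c / Num.sqrt 5 <= (n - 1) * Num.sqrt (ln n / n) ->
  c / 3 + 1 <= n /\ c / (n - 1) <= Num.sqrt (5 * ln n / n).
Proof.
move=> n_ge1 c_gt0; set s := Num.sqrt (ln n / n).
have n_gt0 : 0 < n by lra.
have s5_gt0 : 0 < Num.sqrt 5 :> R by rewrite sqrtr_gt0.
have s5_le3 : Num.sqrt 5 <= 3 :> R by have := sqr_sqrtr (ler0n R 5); nra.
have s_ge0 : 0 <= s by apply: sqrtr_ge0.
have s_le1 : s <= 1.
  by rewrite /s -sqrtr1 ler_sqrt // ler_pdivrMr // mul1r ltW // ln_sublinear.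
have -> : Num.sqrt (5 * ln n / n) = Num.sqrt 5 * s by rewrite /s -mulrA sqrtrM.
rewrite ler_pdivrMr // => c_le.
have s5s_le3 : s * Num.sqrt 5 <= 3 by nra.
have c3_le : c <= 3 * (n - 1) by nra.
by split; [lra | rewrite ler_pdivrMr; nra].
Qed.

Section XiBounds.
Context {R : realType}.

Lemma xi0_ge {N : nat} (V Vi : nat) : 2 <= N%:R :> R ->
  1 - (Vi%:R * (2 / (N%:R ^+ 2 + 1)) + (V - Vi)%:R * (2 / (N%:R ^+ 3 - N%:R ^+ 2 + 1)))
  <= xi0 R N V Vi.
Proof.
rewrite /xi0; set n : R := N%:R => n_ge2.
have a01 : 0 <= 2 / (n ^+ 2 + 1) <= 1.
  by rewrite divr_ge0 ?ler_pdivrMr ?mul1r //=; nra.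
have b01 : 0 <= 2 / (n ^+ 3 - n ^+ 2 + 1) <= 1.
  by rewrite divr_ge0 ?ler_pdivrMr ?mul1r //=; rewrite !exprS expr0; nra.
have [Xge Xle] := expr1B_ge Vi a01.
have [Yge Yle] := expr1B_ge (V - Vi) b01.
exact: mulr_ge1B.
Qed.

Lemma xi1_le {N : nat} (V Vi : nat) : 2 <= N%:R :> R ->
  xi1 R N V Vi
  <= expR (Vi%:R * (2 / (N%:R ^+ 2 - 1)) + (V - Vi)%:R * (2 / (N%:R ^+ 3 - N%:R ^+ 2 - 1))).
Proof.
rewrite /xi1; set n : R := N%:R => n_ge2.
have c_ge0 : 0 <= 2 / (n ^+ 2 - 1) by rewrite divr_ge0 //; nra.
have e_ge0 : 0 <= 2 / (n ^+ 3 - n ^+ 2 - 1) by rewrite divr_ge0 // !exprS expr0; nra.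
rewrite expRD; apply: ler_pM; rewrite ?exprn_ge0 ?expr1D_le_expR //; lra.
Qed.

Lemma xi_rates_le {n h u k : R} :
  2 <= n -> 0 <= u -> 0 <= k -> k <= h * n ^+ 2 -> 2 * u <= 5 * h * n ->
  u * (2 / (n ^+ 2 + 1)) + k * (2 / (n ^+ 3 - n ^+ 2 + 1)) <= 8 * h / (n - 1) /\
  u * (2 / (n ^+ 2 - 1)) + k * (2 / (n ^+ 3 - n ^+ 2 - 1)) <= 8 * h / (n - 3 / 2).
Proof.
move=> n_ge2 u_ge0 k_ge0; rewrite !exprS expr0 => k_le u_le.
have h_ge0 : 0 <= h by nra.
have rate (c D E x : R) : 0 < D -> 0 < E -> 2 * x * E <= c * D -> x * (2 / D) <= c / E.
  by move=> D_gt0 E_gt0 le; rewrite mulrA ler_pdivrMr // mulrAC ler_pdivlMr //; lra.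
have split_8h (E : R) : 0 < E -> 5 * h / E + 2 * h / E <= 8 * h / E.
  by move=> E_gt0; rewrite -mulrDl; apply: ler_wpM2r; [rewrite invr_ge0 ltW | lra].
have n1_gt0 : 0 < n - 1 by lra.
have n32_gt0 : 0 < n - 3 / 2 by lra.
by split; apply: le_trans (split_8h _ _) => //; apply: lerD; apply: rate; nra.
Qed.

Lemma xi_bounds {N V Vi : nat} (h d : R) :
  2 <= N%:R :> R -> V%:R <= h * N%:R ^+ 2 -> 2 * Vi%:R <= 5 * h * N%:R ->
  8 * h / (N%:R - 1) <= d -> 8 * h / (N%:R - 3 / 2) <= ln (1 + d) ->
  (1 - d <= xi0 R N V Vi) && (xi1 R N V Vi <= 1 + d).
Proof.
set n : R := N%:R => n_ge2 V_le Vi_le d_ge ln_ge.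
have k_le : (V - Vi)%:R <= h * n ^+ 2 by apply: le_trans V_le; rewrite ler_nat leq_subr.
have [rate0 rate1] := xi_rates_le n_ge2 (ler0n _ _) (ler0n _ _) k_le Vi_le.
have h_ge0 : 0 <= h by have := ler0n R Vi; nra.
have d_ge0 : 0 <= d by apply: le_trans d_ge; rewrite divr_ge0 //; lra.
apply/andP; split; first by apply: le_trans (xi0_ge V Vi n_ge2); lra.
apply: le_trans (xi1_le V Vi n_ge2) _.
by rewrite -[X in _ <= X]lnK ?posrE ?ler_expR; lra.
Qed.

End XiBounds.

Section MetropolisWalks.
Context {R : realType} {N : nat} {adj : rel 'I_N}.
Hypothesis adj_irr : forall a, ~~ adj a a.

Lemma mh_ge0 a b : 0 <= mh R adj a b.
Proof.
rewrite /mh; case: ifP => _; first by rewrite le_min !invr_ge0 !ler0n.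
case: ifP => _ //; rewrite subr_ge0.
apply: le_trans (_ : \sum_(c | adj a c) (ndeg adj a)%:R^-1 <= _).
  by apply: ler_sum => c _; rewrite ge_min lexx.
rewrite sumr_const /ndeg cardsE -[X in X <= _]mulr_natl.
by case: #|_| => [|d]; rewrite ?invr0 ?mulr0 // mulfV ?pnatr_eq0.
Qed.

Lemma mh_sum1 a : \sum_b mh R adj a b = 1.
Proof.
have off_nbr b : ~~ adj a b -> b != a -> mh R adj a b = 0.
  by rewrite /mh => /negbTE -> /negbTE; rewrite eq_sym => ->.
have at_nbr b : adj a b -> mh R adj a b = Num.min (ndeg adj a)%:R^-1 (ndeg adj b)%:R^-1.
  by rewrite /mh => ->.
rewrite (bigID (adj a)) /= addrC (bigD1 a) //= big1 => [|b /andP[]]; last exact: off_nbr.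
by rewrite addr0 (eq_bigr _ at_nbr) /mh (negbTE (adj_irr a)) eqxx subrK.
Qed.

Lemma walkprob_ge0 L a b : 0 <= walkprob R adj L a b.
Proof.
elim: L b => [|L IHL] b /=; first exact: ler0n.
by apply: sumr_ge0 => c _; rewrite mulr_ge0 ?mh_ge0.
Qed.

Lemma walkprob_sum1 L a : \sum_b walkprob R adj L a b = 1.
Proof.
elim: L => [|L IHL] /=.
  by rewrite (bigD1 a) //= eqxx big1 ?addr0 // => b; rewrite eq_sym => /negbTE ->.
rewrite exchange_big /= -[RHS]IHL; apply: eq_bigr => c _.
by rewrite -mulr_sumr mh_sum1 mulr1.
Qed.

Section Outcomes.
Context {L T : nat} {S : {set 'I_N}}.
Local Notation P := (outcome_prob R adj L (T:=T) (S:=S)).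

Lemma outcome_prob_ge0 w : 0 <= P w.
Proof. by apply: prodr_ge0 => k _; apply: walkprob_ge0. Qed.

Lemma outcome_prob_sum1 : \sum_w P w = 1.
Proof.
rewrite /outcome_prob -(bigA_distr_bigA (fun k : token T S => walkprob R adj L (val k).1)).
by apply: big1 => k _; rewrite walkprob_sum1.
Qed.

Lemma Prob_compl_ge (E F : pred (outcome T S)) :
  (forall w, ~~ E w -> F w) -> 1 - Prob R adj L F <= Prob R adj L E.
Proof.
move=> EF; rewrite -outcome_prob_sum1 (bigID E) /= lerBlDr lerD2l.
rewrite [leRHS]big_mkcond [leLHS]big_mkcond; apply: ler_sum => w _.
case: (boolP (E w)) => [_|/EF ->] /=; last exact: lexx.
by case: (F w); rewrite ?outcome_prob_ge0.
Qed.

Lemma Vtot_le : (Vtot T S <= N * T)%N.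
Proof.
rewrite /Vtot /token card_sig; apply: leq_trans (max_card _) _.
by rewrite card_prod !card_ord.
Qed.

Lemma mgf_Vsampled (t : R) i :
  \sum_w P w * expR (t * (Vsampled i w)%:R)
  = \prod_(k : token T S) \sum_b walkprob R adj L (val k).1 b * expR (t * (b == i)%:R).
Proof.
rewrite (bigA_distr_bigA (fun k : token T S => fun b =>
  walkprob R adj L (val k).1 b * expR (t * (b == i)%:R))).
apply: eq_bigr => w _; rewrite big_split /= -expR_sum -mulr_sumr /Vsampled.
congr (_ * expR (_ * _)); rewrite -sum1_card natr_sum big_mkcond /=.
by apply: eq_bigr => k _; rewrite inE; case: (w k == i).
Qed.

Lemma Vsampled_tail i (q a : R) :
  (forall k : token T S, walkprob R adj L (val k).1 i <= q) ->
  Prob R adj L (fun w : outcome T S => a <= 2^-1 * (Vsampled i w)%:R)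
  <= expR ((Vtot T S)%:R * q - a).
Proof.
move=> wq; apply: le_trans (markov_expR _ _ a outcome_prob_ge0) _.
rewrite mgf_Vsampled.
apply: le_trans
  (_ : expR (- a) * \prod_(k : token T S) expR (walkprob R adj L (val k).1 i) <= _).
  apply: ler_wpM2l; first exact: expR_ge0.
  apply: ler_prod => k _; apply/andP; split.
    by apply: sumr_ge0 => b _; rewrite mulr_ge0 ?walkprob_ge0 ?expR_ge0.
  exact: mgf_indicator_le _ i (walkprob_ge0 _ _) (walkprob_sum1 _ _).
rewrite -expR_sum -expRD addrC ler_expR lerD2r.
by apply: le_trans (ler_sum _ (fun k _ => wq k)) _; rewrite sumr_const /Vtot mulr_natl.
Qed.

Lemma Vsampled_tail_invXn i (h : R) :
  10 <= N%:R :> R -> 100 <= h -> T%:R <= h * N%:R ->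
  (forall a b, walkprob R adj L a b <= N%:R^-1 + (N%:R ^+ 3)^-1) ->
  Prob R adj L (fun w : outcome T S => 5 * h * N%:R / 4 <= 2^-1 * (Vsampled i w)%:R)
  <= (N%:R ^+ 10)^-1.
Proof.
set n : R := N%:R; set q := n^-1 + (n ^+ 3)^-1 => n_ge h_ge T_le wq.
have n_gt0 : 0 < n by lra.
apply: le_trans (Vsampled_tail i _ _ (fun k => wq _ i)) _.
apply: le_trans (expRN_natmul_le_invXn _ 10 n_gt0); rewrite ler_expR.
have q_ge0 : 0 <= q by rewrite addr_ge0 ?invr_ge0 ?exprn_ge0 ?ltW.
have nq_le : n * q <= 11 / 10.
  have : n / n ^+ 3 <= 1 / 10.
    by rewrite ler_pdivrMr ?exprn_gt0 // mulrAC ler_pdivlMr // !exprS expr0; nra.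
  by rewrite /q mulrDr mulfV ?gt_eqF //; lra.
have V_le : (Vtot T S)%:R <= n * T%:R by rewrite -natrM ler_nat Vtot_le.
have Vq_le : (Vtot T S)%:R * q <= T%:R * (11 / 10).
  apply: le_trans (ler_wpM2r q_ge0 V_le) _.
  by rewrite mulrAC mulrC; apply: ler_wpM2l.
nra.
Qed.

End Outcomes.

End MetropolisWalks.

Theorem lemma8 (R : realType) (N : nat) (adj : rel 'I_N)
  (M : nat) (sigma beta : R) (g : nat -> R) (T L : nat)
  (S : {set 'I_N}) (i : 'I_N) :
  undirected_simple adj -> graph_connected adj -> non_bipartite adj ->
  (0 < M)%N ->
  11 <= sigma -> 2^-1 < beta < 1 ->
  (forall l : R, 0 < l -> exists N0 : nat, forall n : nat, (N0 <= n)%N ->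
       l * ln n%:R < g n /\ g n < l * n%:R) ->
  T%:R = 16 * sigma / (1 - beta) * g N ->
  (forall a b : 'I_N,
     N%:R^-1 - (N%:R ^+ 3)^-1 <= @walkprob R N adj L a b <= N%:R^-1 + (N%:R ^+ 3)^-1) ->
  g N < N%:R ->
  (N%:R - 1) * Num.sqrt (ln N%:R / N%:R) >= 8 * (16 * sigma / (1 - beta)) / Num.sqrt 5 ->
  (N%:R - 3 / 2) * ln (1 + Num.sqrt (5 * ln N%:R / N%:R)) >= 8 * (16 * sigma / (1 - beta)) ->
  @Prob R N adj L T S
    (fun w => (1 - Num.sqrt (5 * ln N%:R / N%:R) <= xi0 R N (Vtot T S) (Vsampled i w))
           && (xi1 R N (Vtot T S) (Vsampled i w) <= 1 + Num.sqrt (5 * ln N%:R / N%:R)))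
  >= 1 - (6 * M + 3)%:R / N%:R ^+ 10.
Proof.
move=> [_ adj_irr] _ _ _ sigma_ge /andP[beta_gt beta_lt] _ T_eq walk_bnd gN_lt.
move=> sqrt_cond ln_cond.
set n : R := N%:R in T_eq walk_bnd gN_lt sqrt_cond ln_cond *.
set h := 16 * sigma / (1 - beta) in T_eq sqrt_cond ln_cond *.
set d := Num.sqrt (5 * ln n / n) in ln_cond *.
have n_ge1 : 1 <= n by rewrite ler1n (leq_ltn_trans (leq0n _) (ltn_ord i)).
have h_ge : 100 <= h by rewrite ler_pdivlMr ?subr_gt0 //; lra.
have [n_ge d_ge] : 8 * h / 3 + 1 <= n /\ 8 * h / (n - 1) <= d.
  by apply: sqrt5_ln_div_bounds => //; lra.
have n_ge10 : 10 <= n by lra.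
have ln_ge : 8 * h / (n - 3 / 2) <= ln (1 + d) by rewrite ler_pdivrMr; lra.
have T_le : T%:R <= h * n by rewrite T_eq ler_wpM2l ?ltW //; lra.
have walk_le a b : walkprob R adj L a b <= n^-1 + (n ^+ 3)^-1 by case/andP: (walk_bnd a b).
have tail := Vsampled_tail_invXn adj_irr (S := S) i h n_ge10 h_ge T_le walk_le.
set large := fun w : outcome T S => 5 * h * n / 4 <= 2^-1 * (Vsampled i w)%:R.
apply: le_trans (Prob_compl_ge adj_irr _ large _) => [|w].
  rewrite lerD2l lerN2; apply: le_trans tail _.
  by rewrite -[leLHS]mul1r ler_wpM2r ?invr_ge0 ?exprn_ge0 // ler1n addn3.
apply: contraR; rewrite -ltNge => Vi_lt; apply: (xi_bounds h) => //; first lra.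
  apply: le_trans (_ : n * T%:R <= _); first by rewrite -natrM ler_nat Vtot_le.
  by rewrite expr2 mulrCA; apply: ler_wpM2l; rewrite ?ler0n.
lra.
Qed.
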